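(* Let $c = 2^{2k+1}m$ with $k \geq 1$ an integer and $m$ an odd integer. Fix an algebraic closure $\overline{\mathbb{Q}}_2$ of $\mathbb{Q}_2$, an element $\delta$ with $\delta^2 = -c$, and $\alpha, \beta \in \overline{\mathbb{Q}}_2$ with $\alpha^2 = -c+\delta$, $\beta^2 = -c - \delta$. Let $L_c = \mathbb{Q}_2(\alpha,\beta)$ and $G = \mathrm{Gal}(L_c/\mathbb{Q}_2)$, whose elements are $\sigma_0 = \mathrm{id}$ and $\sigma_1,\dots,\sigma_7$ determined by $(\sigma(\alpha),\sigma(\beta))$: $\sigma_1: (-\alpha,\beta)$, $\sigma_2: (\alpha,-\beta)$, $\sigma_3: (-\alpha,-\beta)$, $\sigma_4: (\beta,\alpha)$, $\sigma_5: (-\beta,\alpha)$, $\sigma_6: (\beta,-\alpha)$, $\sigma_7: (-\beta,-\alpha)$. Then the lower ramification groups of $L_c/\mathbb{Q}_2$ are: $G_0 = G_1 = G$; $G_2 = G_3 = \{\sigma_0,\sigma_3,\sigma_5,\sigma_6\}$; $G_4 = G_5 = G_6 = G_7 = \{\sigma_0,\sigma_3\}$; $G_n = \{\sigma_0\}$ for $n \geq 8$.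
   Context: For such $c$, $L_c/\mathbb{Q}_2$ is a totally ramified Galois extension of degree $8$ (with group $D_4$). Let $\pi$ be a uniformizer of $L_c$ and $v_\pi$ the valuation with $v_\pi(\pi) = 1$ (so $v_\pi(2)=8$). For $i \geq 0$, $G_i = \{g \in G : v_\pi(g(\pi) - \pi) \geq i+1\}$. *)

From HB Require Import structures.
From mathcomp Require Import all_boot all_order all_algebra all_fingroup all_field.
Set Implicit Arguments. Unset Strict Implicit. Unset Printing Implicit Defensive.
Import Order.TTheory GRing.Theory Num.Theory.
Local Open Scope ring_scope.

(* A (rank-one, Z-valued) valuation on a field, given on nonzero elements;
   the value at 0 (= +oo) is never used. *)
Definition is_valuation (F : fieldType) (w : F -> int) : Prop :=
  (forall x y : F, x != 0 -> y != 0 -> w (x * y) = w x + w y) /\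
  (forall x y : F, x != 0 -> y != 0 -> x + y != 0 ->
      Num.min (w x) (w y) <= w (x + y)).

(* "v(x - y) >= N", with v(0) = +oo *)
Definition vclose (F : fieldType) (w : F -> int) (N : int) (x y : F) : Prop :=
  x = y \/ N <= w (x - y).

(* (K, v) is (a copy of) the field Q_2 with its normalized 2-adic valuation:
   a complete discretely valued field with v(2) = 1 (2 is a uniformizer)
   and residue field F_2.  By the Cohen structure theorem this characterizes
   Q_2 up to isomorphism of valued fields. *)
Definition is_Q2 (K : fieldType) (v : K -> int) : Prop :=
  [/\ is_valuation v,
      v 2 = 1,
      (* residue field is F_2 : every unit is congruent to 1 *)
      (forall x : K, x != 0 -> v x = 0 -> vclose v 1 x 1)
    &
      (forall u : nat -> K,
         (forall N : int, exists n0 : nat, forall p q : nat,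
              (n0 <= p)%N -> (n0 <= q)%N -> vclose v N (u p) (u q)) ->
         exists l : K, forall N : int, exists n0 : nat, forall p : nat,
              (n0 <= p)%N -> vclose v N (u p) l)].

Definition ram_group (K : fieldType) (L : splittingFieldType K)
    (w : L -> int) (pi : L) (i : nat) : {set gal_of {:L}} :=
  [set g in ('Gal({:L} / 1%VS))%g | (g pi == pi) || ((i.+1)%:Z <= w (g pi - pi))].

Definition gal_by_images (K : fieldType) (L : splittingFieldType K)
    (alpha beta : L) (s : seq (L * L)) : {set gal_of {:L}} :=
  [set g in ('Gal({:L} / 1%VS))%g | (g alpha, g beta) \in s].

From HB Require Import structures.
From mathcomp Require Import all_boot all_order all_algebra all_fingroup all_field.
From mathcomp Require Import ring lra zify.
Import Order.TTheory GRing.Theory Num.Theory.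
Set Implicit Arguments. Unset Strict Implicit. Unset Printing Implicit Defensive.
Local Open Scope ring_scope.

(* Write P = 2^k, so that c = 2 P^2 m, and recall that w 2 = 8.  The rescaled
   elements D = delta / P, A = alpha D^k / P and i = alpha beta / delta satisfy
   D^2 = -2m, A^2 = D (1 + P D) (-m)^k and i^2 = -(1 + c), so w D = 4, w A = 2
   and w i = 0.  With s = 1 + D + A^3, the element t = i - s is a root of
   X^2 + 2 s X + (s^2 + 1 + c), whose constant term has valuation 14; hence
   w t = 7 and pi0 = t / (D A) is a uniformizer.  An automorphism g changes the
   signs of D, A and i according to its action on (alpha, beta), and in each
   case w (g pi0 - pi0) is computed directly to be 2, 4 or 8.  Since [L : K] <= 8
   and w (K^* ) = 8Z, the powers 1, pi0, ..., pi0^7 form a basis in which any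
   uniformizer pi has a unit coefficient on pi0 and integral coefficients
   elsewhere, so w (g pi - pi) = w (g pi0 - pi0). *)

Section Biquadratic.
Variable F : fieldType.

Definition rescaled_rel (k : nat) (m : int) (D A i : F) :=
  [/\ D ^+ 2 = - (2 * m%:~R), A ^+ 2 = D * (1 + 2 ^+ k * D) * (- m%:~R) ^+ k
    & i ^+ 2 = - (1 + 2 * (2 ^+ k) ^+ 2 * m%:~R)].

Definition unif_num (D A i : F) := i - (1 + D + A ^+ 3).
Definition unif_of (D A i : F) := unif_num D A i / (D * A).

Definition c_const (k : nat) (m : int) : F := (2 ^+ (2 * k + 1) * m)%:~R.

Definition root_triple (c delta alpha beta : F) :=
  [/\ delta ^+ 2 = - c, alpha ^+ 2 = - c + delta & beta ^+ 2 = - c - delta].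

Lemma sqr_eqP (x y : F) : x ^+ 2 = y ^+ 2 -> x = y \/ x = - y.
Proof. by move/eqP; rewrite eqf_sqr => /orP[] /eqP; [left | right]. Qed.

Lemma root_triple_cases c d a b d' a' b' :
  root_triple c d a b -> root_triple c d' a' b' ->
  (d' = d /\ (a' = a \/ a' = - a) /\ (b' = b \/ b' = - b)) \/
  (d' = - d /\ (a' = b \/ a' = - b) /\ (b' = a \/ b' = - a)).
Proof.
case=> hd ha hb [hd' ha' hb'].
move: ha' hb'; have [->|->] := sqr_eqP (etrans hd' (esym hd)) => ha' hb'.
  left; split=> //; split; apply: sqr_eqP.
    by rewrite ha' ha.
  by rewrite hb' hb.
right; split=> //; split; apply: sqr_eqP.
  by rewrite ha' hb.
by rewrite hb' ha opprK.
Qed.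

Definition resc_D (k : nat) (delta : F) := delta / 2 ^+ k.
Definition resc_A (k : nat) (delta alpha : F) := alpha * resc_D k delta ^+ k / 2 ^+ k.
Definition resc_i (delta alpha beta : F) := alpha * beta / delta.
Definition unif_of_roots (k : nat) (delta alpha beta : F) :=
  unif_of (resc_D k delta) (resc_A k delta alpha) (resc_i delta alpha beta).

Lemma resc_DN k d : resc_D k (- d) = - resc_D k d.
Proof. exact: mulNr. Qed.

Lemma resc_AN k d a : resc_A k d (- a) = - resc_A k d a.
Proof. by rewrite /resc_A !mulNr. Qed.

Lemma resc_iNl d a b : resc_i d (- a) b = - resc_i d a b.
Proof. by rewrite /resc_i !mulNr. Qed.

Lemma resc_iNr d a b : resc_i d a (- b) = - resc_i d a b.
Proof. by rewrite /resc_i mulrN mulNr. Qed.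

Lemma resc_iNd d a b : resc_i (- d) a b = - resc_i d a b.
Proof. by rewrite /resc_i invrN mulrN. Qed.

Lemma resc_iC d a b : resc_i d b a = resc_i d a b.
Proof. by rewrite /resc_i [b * a]mulrC. Qed.

Definition ram_seq4 (alpha beta : F) := [:: (alpha, beta); (- alpha, - beta)].
Definition ram_seq2 (alpha beta : F) :=
  [:: (alpha, beta); (- alpha, - beta); (- beta, alpha); (beta, - alpha)].

(* The claimed value of w (g pi - pi) for g <> 1 with (g alpha, g beta) = p. *)
Definition ram_index (alpha beta : F) (p : F * F) : int :=
  if p \in ram_seq4 alpha beta then 8 else if p \in ram_seq2 alpha beta then 4 else 2.

Lemma ram_seq4_sub a b : {subset ram_seq4 a b <= ram_seq2 a b}.
Proof. by move=> p; rewrite !inE => /orP[] ->; rewrite ?orbT. Qed.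

Lemma ram_index_leE a b p (j : nat) : (j%:Z <= ram_index a b p) =
  [|| (j <= 2)%N, (j <= 4)%N && (p \in ram_seq2 a b) | (j <= 8)%N && (p \in ram_seq4 a b)].
Proof.
rewrite /ram_index; case: ifP => p4; first by rewrite (ram_seq4_sub p4) /=; lia.
by case: ifP => p2 /=; lia.
Qed.

End Biquadratic.

Arguments c_const {F} k m.

Section Valuation.
Variables (F : fieldType) (w : F -> int).
Hypothesis hw : is_valuation w.

Definition val_ge (N : int) (x : F) := x = 0 \/ N <= w x.
Definition val_is (N : int) (x : F) := x != 0 /\ w x = N.

Lemma valuationM x y : x != 0 -> y != 0 -> w (x * y) = w x + w y.
Proof. by case: hw => h _; apply: h. Qed.

Lemma valuation_minD x y : x != 0 -> y != 0 -> x + y != 0 ->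
  Num.min (w x) (w y) <= w (x + y).
Proof. by case: hw => _ h; apply: h. Qed.

Lemma valuation1 : w 1 = 0.
Proof.
by have := valuationM (oner_neq0 F) (oner_neq0 F); rewrite mulr1; set a := w 1; lia.
Qed.

Lemma valuationN x : x != 0 -> w (- x) = w x.
Proof.
move=> x0; have N1 : (-1 : F) != 0 by rewrite oppr_eq0 oner_neq0.
have := valuationM N1 N1; rewrite mulrNN mulr1 valuation1; set a := w (-1) => wN1.
by rewrite -mulN1r valuationM // -/a (_ : a = 0) ?add0r //; lia.
Qed.

Lemma valuationV x : x != 0 -> w x^-1 = - w x.
Proof.
by move=> x0; have := valuationM x0 (invr_neq0 x0); rewrite mulfV // valuation1; lia.
Qed.

Lemma valuationX x n : x != 0 -> w (x ^+ n) = n%:Z * w x.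
Proof.
move=> x0; elim: n => [|n IH]; first by rewrite expr0 valuation1 mul0r.
by rewrite exprS valuationM ?expf_neq0 // IH; lia.
Qed.

Lemma val_is_neq0 N x : val_is N x -> x != 0. Proof. by case. Qed.

Lemma val_isW N M x : N = M -> val_is N x -> val_is M x.
Proof. by move=> ->. Qed.

Lemma val_is_inj N M x : val_is N x -> val_is M x -> N = M.
Proof. by move=> [_ <-] [_ <-]. Qed.

Lemma val_is_ge N x : val_is N x -> val_ge N x.
Proof. by move=> [_ h]; right; rewrite h. Qed.

Lemma val_ge0 N : val_ge N 0. Proof. by left. Qed.

Lemma val_geW N M x : N <= M -> val_ge M x -> val_ge N x.
Proof. by move=> NM [->|h]; [left | right; lia]. Qed.

Lemma val_geN N x : val_ge N x -> val_ge N (- x).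
Proof.
have [->|x0] := eqVneq x 0; first by rewrite oppr0.
by case=> [/eqP|h]; [rewrite (negbTE x0) | right; rewrite valuationN].
Qed.

Lemma val_isN N x : val_is N x -> val_is N (- x).
Proof. by move=> [x0 h]; split; [rewrite oppr_eq0 | rewrite valuationN]. Qed.

Lemma val_geD N x y : val_ge N x -> val_ge N y -> val_ge N (x + y).
Proof.
have [->|x0] := eqVneq x 0; first by rewrite add0r.
have [->|y0] := eqVneq y 0; first by rewrite addr0.
have [s0|s0] := eqVneq (x + y) 0; first by left.
move=> [/eqP|hx]; first by rewrite (negbTE x0).
move=> [/eqP|hy]; first by rewrite (negbTE y0).
right; have := valuation_minD x0 y0 s0.
by rewrite ge_min => /orP[] h; apply: le_trans h.
Qed.

Lemma val_geB N x y : val_ge N x -> val_ge N y -> val_ge N (x - y).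
Proof. by move=> hx /val_geN; apply: val_geD. Qed.

Lemma val_geM N M x y : val_ge N x -> val_ge M y -> val_ge (N + M) (x * y).
Proof.
have [->|x0] := eqVneq x 0; first by rewrite mul0r; left.
have [->|y0] := eqVneq y 0; first by rewrite mulr0; left.
move=> [/eqP|hx]; first by rewrite (negbTE x0).
move=> [/eqP|hy]; first by rewrite (negbTE y0).
by right; rewrite valuationM //; lia.
Qed.

Lemma val_isM N M x y : val_is N x -> val_is M y -> val_is (N + M) (x * y).
Proof. by move=> [x0 <-] [y0 <-]; split; [rewrite mulf_neq0 | rewrite valuationM]. Qed.

Lemma val_isV N x : val_is N x -> val_is (- N) x^-1.
Proof. by move=> [x0 <-]; split; [rewrite invr_eq0 | rewrite valuationV]. Qed.

Lemma val_isX N x n : val_is N x -> val_is (n%:Z * N) (x ^+ n).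
Proof. by move=> [x0 <-]; split; [rewrite expf_neq0 | rewrite valuationX]. Qed.

Lemma val_geX N x n : val_ge N x -> val_ge (n%:Z * N) (x ^+ n).
Proof.
have [->|x0] := eqVneq x 0.
  case: n => [|n] _; last by rewrite expr0n; left.
  by rewrite expr0; right; rewrite valuation1; lia.
move=> [/eqP|h]; first by rewrite (negbTE x0).
by right; rewrite valuationX //; apply: ler_wpM2l.
Qed.

Lemma val_isDr N x y : val_is N x -> val_ge (N + 1) y -> val_is N (x + y).
Proof.
move=> [x0 <-] hy; have [->|y0] := eqVneq y 0; first by rewrite addr0.
case: hy => [/eqP|hy]; first by rewrite (negbTE y0).
have s0 : x + y != 0.
  apply: contraTneq hy => /(canRL (addrK y)); rewrite sub0r => ->.
  by rewrite valuationN //; lia.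
have h1 := valuation_minD x0 y0 s0.
have ny0 : - y != 0 by rewrite oppr_eq0.
have := valuation_minD s0 ny0; rewrite addrK valuationN // => /(_ x0) h2.
split=> //; move: h1 h2; rewrite !ge_min; move: (w (x + y)) => s.
by move=> /orP[] ? /orP[] ?; lia.
Qed.

Lemma val_isDl N x y : val_ge (N + 1) x -> val_is N y -> val_is N (x + y).
Proof. by move=> hx hy; rewrite addrC; apply: val_isDr. Qed.

Lemma val_ge_sum (I : Type) (r : seq I) (P : pred I) (f : I -> F) N :
  (forall i, P i -> val_ge N (f i)) -> val_ge N (\sum_(i <- r | P i) f i).
Proof.
by move=> h; apply: (big_ind (val_ge N)) => // [|x y]; [exact: val_ge0 | exact: val_geD].
Qed.

Lemma val_is_sqr N x y : x ^+ 2 = y -> val_is (2 * N) y -> val_is N x.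
Proof.
move=> <- [x20 h]; have x0 : x != 0 by apply: contraNneq x20 => ->; rewrite expr0n.
by split=> //; move: h; rewrite valuationX //; lia.
Qed.

Lemma val_is_factors N M x y :
  val_is (2 * N) (x * y) -> val_is M (x - y) -> N < M -> val_is N x /\ val_is N y.
Proof.
move=> [xy0 hxy] hd NM.
have x0 : x != 0 by apply: contraNneq xy0 => ->; rewrite mul0r.
have y0 : y != 0 by apply: contraNneq xy0 => ->; rewrite mulr0.
rewrite valuationM // in hxy.
have [lt|ge] := ltP (w x) (w y).
  have ny : val_ge (w x + 1) (- y) by apply: val_geN; right; lia.
  by have := val_is_inj (val_isDr (conj x0 erefl) ny) hd; lia.
have [lt'|ge'] := ltP (w y) (w x).
  have hx : val_ge (w y + 1) x by right; lia.
  by have := val_is_inj (val_isDl hx (val_isN (conj y0 erefl))) hd; lia.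
by split; split=> //; lia.
Qed.

Lemma val_sum_distinct n (f : nat -> F) :
  (forall i j, (i < n)%N -> (j < n)%N -> i != j -> f i != 0 -> f j != 0 ->
     w (f i) != w (f j)) ->
  (forall i, (i < n)%N -> f i = 0) \/
  exists j, [/\ (j < n)%N, f j != 0, val_is (w (f j)) (\sum_(i < n) f i)
    & forall i, (i < n)%N -> f i != 0 -> w (f j) <= w (f i)].
Proof.
elim: n => [|n IH] hd; first by left.
rewrite big_ord_recr /=.
have [hz|[j [jn fj0 hs hmin]]] := IH (fun i j hi hj => hd i j (ltnW hi) (ltnW hj)).
  rewrite big1 ?add0r; last by move=> i _; apply: hz.
  have [fn0|fn0] := eqVneq (f n) 0.
    by left=> i; rewrite ltnS leq_eqVlt => /orP[/eqP->|/hz].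
  right; exists n; split=> //.
  by move=> i; rewrite ltnS leq_eqVlt => /orP[/eqP->|/hz->] //; rewrite eqxx.
have [fn0|fn0] := eqVneq (f n) 0.
  right; exists j; split; [exact: ltnW | done | by rewrite fn0 addr0 |].
  by move=> i; rewrite ltnS leq_eqVlt => /orP[/eqP->|]; [rewrite fn0 eqxx | apply: hmin].
have /eqP ne := hd j n (ltnW jn) (ltnSn n) (negbT (ltn_eqF jn)) fj0 fn0.
have [lt|ge] := ltP (w (f n)) (w (f j)).
  right; exists n; split=> //.
    by apply: val_isDl (conj fn0 erefl); apply: val_geW (val_is_ge hs); lia.
  move=> i; rewrite ltnS leq_eqVlt => /orP[/eqP->//|ilt fi0].
  by have := hmin i ilt fi0; lia.
right; exists j; split=> //; first exact: ltnW.
  by apply: val_isDr hs _; right; lia.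
by move=> i; rewrite ltnS leq_eqVlt => /orP[/eqP->|] //; apply: hmin.
Qed.

Lemma val_is_quadratic_root e N s f t :
  val_is e 2 -> val_is 0 s -> val_is (2 * N) f -> N < e ->
  t ^+ 2 + 2 * t * s + f = 0 -> val_is N t.
Proof.
move=> e2 es ef Ne ht.
have t0 : t != 0.
  apply/eqP => t0; move: ht (val_is_neq0 ef).
  by rewrite t0 expr2 !(mulr0, mul0r) !add0r => ->; rewrite eqxx.
have et : val_is (w t) t by [].
have e2ts : val_is (e + w t + 0) (2 * t * s) := val_isM (val_isM e2 et) es.
have [lt|ge] := ltP (w t) N.
  suff : val_is (2%:Z * w t) (t ^+ 2 + (2 * t * s + f)).
    by rewrite addrA ht => /val_is_neq0; rewrite eqxx.
  apply: val_isDr (val_isX 2 et) (val_geD _ _).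
    by apply: val_geW (val_is_ge e2ts); lia.
  by apply: val_geW (val_is_ge ef); lia.
have [gt|eq] := ltP N (w t); last by split=> //; lia.
suff : val_is (2 * N) (t ^+ 2 + 2 * t * s + f) by rewrite ht => /val_is_neq0; rewrite eqxx.
apply: val_isDl ef; apply: val_geD.
  by apply: val_geW (val_is_ge (val_isX 2 et)); lia.
by apply: val_geW (val_is_ge e2ts); lia.
Qed.

Lemma val_ge_pow_sub (x y : F) N n :
  val_is 1 x -> val_is 1 y -> val_is N (x - y) ->
  val_ge (N + 1) (x ^+ n.+2 - y ^+ n.+2).
Proof.
move=> ex ey exy; rewrite subrXX.
have gs : val_ge n.+1%:Z (\sum_(l < n.+2) x ^+ (n.+1 - l) * y ^+ l).
  apply: val_ge_sum => l _; apply/val_is_ge.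
  apply: val_isW (val_isM (val_isX _ ex) (val_isX _ ey)).
  by have := ltn_ord l; lia.
by apply: val_geW (val_geM (val_is_ge exy) gs); lia.
Qed.

Lemma val_ge_nat n : val_ge 0 n%:R.
Proof.
elim: n => [|n IH]; first by left.
by rewrite -addn1 natrD; apply: val_geD => //; right; rewrite valuation1.
Qed.

Lemma val_ge_int (z : int) : val_ge 0 z%:~R.
Proof.
case: z => n; first by rewrite -pmulrn; apply: val_ge_nat.
by rewrite NegzE mulrNz -pmulrn; apply/val_geN/val_ge_nat.
Qed.

Section IntegerValues.
Variable e : int.
Hypothesis e2 : val_is e 2.

Lemma val_ge_even (z : int) : (2 %| z)%Z -> val_ge e z%:~R.
Proof.
move=> z2; have -> : z = (z %/ 2)%Z * 2 by lia.
by rewrite intrM -[e]add0r; apply: val_geM (val_ge_int _) (val_is_ge e2).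
Qed.

Lemma val_is_odd (z : int) : odd `|z|%N -> 0 < e -> val_is 0 z%:~R.
Proof.
move=> zodd e0; rewrite -[z](subrK 1) intrD addrC.
apply: val_isDr; first by split; [exact: oner_neq0 | exact: valuation1].
by apply: val_geW (val_ge_even _); lia.
Qed.

End IntegerValues.

Section Rescaled.
Hypothesis two : val_is 8 2.
Variables (k : nat) (m : int).
Hypothesis hk : (1 <= k)%N.
Hypothesis hm : odd `|m|%N.

Local Notation P := (2 ^+ k : F).
Local Notation mm := (m%:~R : F).
Local Notation mu := ((- m%:~R) ^+ k : F).

Lemma val_is_pow2 : val_is (8 * k%:Z) P.
Proof. by apply: val_isW (val_isX k two); lia. Qed.

Lemma val_is_m : val_is 0 mm.
Proof. by apply: (val_is_odd two hm). Qed.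

Lemma val_is_mu : val_is 0 mu.
Proof. by apply: val_isW (val_isX k (val_isN val_is_m)); lia. Qed.

Lemma val_is1 : val_is 0 (1 : F).
Proof. by split; [exact: oner_neq0 | exact: valuation1]. Qed.

Lemma c_constE : c_const k m = 2 * P ^+ 2 * mm.
Proof.
rewrite /c_const rmorphM rmorphXn /= rmorph_nat exprD expr1 -exprM mulnC.
by rewrite [_ ^+ _ * 2]mulrC.
Qed.

Lemma val_is_c_const : val_is (8 + 16 * k%:Z) (c_const k m).
Proof.
rewrite c_constE.
by apply: val_isW (val_isM (val_isM two (val_isX 2 val_is_pow2)) val_is_m); lia.
Qed.

Lemma rescaled_vals D A i : rescaled_rel k m D A i ->
  [/\ val_is 4 D, val_is 2 A & val_is 0 i].
Proof.
case=> hD hA hi.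
have eD : val_is 4 D.
  by apply: (val_is_sqr hD); apply/val_isN; apply: val_isW (val_isM two val_is_m); lia.
have e1PD : val_is 0 (1 + P * D).
  by apply: val_isDr val_is1 _; apply: val_geW (val_is_ge (val_isM val_is_pow2 eD)); lia.
split=> //.
  apply: (val_is_sqr hA).
  by apply: val_isW (val_isM (val_isM eD e1PD) val_is_mu); lia.
apply: (val_is_sqr (N := 0) hi); apply/val_isN; apply: val_isDr val_is1 _.
apply: val_geW (val_is_ge (val_isM (val_isM two (val_isX 2 val_is_pow2)) val_is_m)).
lia.
Qed.

Lemma val_is_unif_const D A i : rescaled_rel k m D A i ->
  val_is 14 ((1 + D + A ^+ 3) ^+ 2 + 1 + 2 * P ^+ 2 * mm).
Proof.
move=> hR; have [eD eA _] := rescaled_vals hR; case: hR => hD hA _.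
have ePD := val_isM val_is_pow2 eD.
have gPD : val_ge 0 (P * D) by apply: val_geW (val_is_ge ePD); lia.
have eA3 := val_isX 3 eA.
(* Expand using D^2 = -2m and A^6 = -2 m D ((1 + P D) mu)^3: every term except
   2 A^3 has valuation at least 15. *)
have -> : (1 + D + A ^+ 3) ^+ 2 + 1 + 2 * P ^+ 2 * mm = 2 * A ^+ 3 +
    (2 * (1 - mm) + 2 * D * (1 - mm * ((1 + P * D) * mu) ^+ 3)
     + 2 * D * A ^+ 3 + 2 * P ^+ 2 * mm).
  by ring: hD hA.
apply: val_isDr; first by apply: val_isW (val_isM two eA3); lia.
apply: val_geD; [apply: val_geD; [apply: val_geD|] |].
- have -> : 1 - mm = (1 - m)%:~R by rewrite rmorphB rmorph1.
  have ev : (2 %| 1 - m)%Z by lia.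
  by apply: val_geW (val_geM (val_is_ge two) (val_ge_even two ev)).
- have -> : 1 - mm * ((1 + P * D) * mu) ^+ 3 = (1 - mm * mu ^+ 3)
      - mm * mu ^+ 3 * ((P * D) * (3%:R + 3%:R * (P * D) + (P * D) ^+ 2)) by ring.
  have g1 : val_ge 8 (1 - mm * mu ^+ 3).
    have -> : 1 - mm * mu ^+ 3 = (1 - m * (- m) ^+ (k * 3))%:~R.
      by rewrite rmorphB rmorph1 rmorphM rmorphXn rmorphN exprM.
    apply: (val_ge_even two).
    have : odd `|(m * (- m) ^+ (k * 3))%R|%N by rewrite abszM abszX abszN oddM oddX hm orbT.
    by lia.
  have g3 : val_ge 0 (3%:R + 3%:R * (P * D) + (P * D) ^+ 2).
    apply: val_geD; last by apply: val_geW (val_geX 2 gPD); lia.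
    by apply: val_geD (val_ge_nat _) _; apply: val_geW (val_geM (val_ge_nat 3) gPD).
  have g2 : val_ge 8 (mm * mu ^+ 3 * ((P * D) * (3%:R + 3%:R * (P * D) + (P * D) ^+ 2))).
    apply: val_geW (val_geM (val_geM (val_is_ge val_is_m) (val_is_ge (val_isX 3 val_is_mu)))
      (val_geM (val_is_ge ePD) g3)); lia.
  by apply: val_geW (val_geM (val_geM (val_is_ge two) (val_is_ge eD)) (val_geB g1 g2)); lia.
- by apply: val_geW (val_is_ge (val_isM (val_isM two eD) eA3)); lia.
apply: val_geW (val_is_ge (val_isM (val_isM two (val_isX 2 val_is_pow2)) val_is_m)); lia.
Qed.

Lemma val_is_unif_num D A i : rescaled_rel k m D A i -> val_is 7 (unif_num D A i).
Proof.
move=> hR; have [eD eA _] := rescaled_vals hR; have [_ _ hi] := hR.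
have es : val_is 0 (1 + D + A ^+ 3).
  apply: val_isDr; last by apply: val_geW (val_is_ge (val_isX 3 eA)); lia.
  by apply: val_isDr val_is1 _; apply: val_geW (val_is_ge eD); lia.
apply: (val_is_quadratic_root (N := 7) two es (val_is_unif_const hR)) => //.
by rewrite /unif_num; ring: hi.
Qed.

Lemma val_is_unif D A i : rescaled_rel k m D A i -> val_is 1 (unif_of D A i).
Proof.
move=> hR; have [eD eA _] := rescaled_vals hR.
by apply: val_isW (val_isM (val_is_unif_num hR) (val_isV (val_isM eD eA))); lia.
Qed.

Section Differences.
Variables D A i : F.
Hypothesis hR : rescaled_rel k m D A i.

Lemma val_unif_oppAi : val_is 2 (unif_of D (- A) (- i) - unif_of D A i).
Proof.
have [eD eA _] := rescaled_vals hR.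
have -> : unif_of D (- A) (- i) - unif_of D A i = 2 * (1 + D) / (D * A).
  by rewrite /unif_of /unif_num; field; rewrite oppr_eq0 (val_is_neq0 eA) (val_is_neq0 eD).
have e1D : val_is 0 (1 + D).
  by apply: val_isDr val_is1 _; apply: val_geW (val_is_ge eD); lia.
by apply: val_isW (val_isM (val_isM two e1D) (val_isV (val_isM eD eA))); lia.
Qed.

Lemma val_unif_oppi : val_is 2 (unif_of D A (- i) - unif_of D A i).
Proof.
have [eD eA ei] := rescaled_vals hR.
have -> : unif_of D A (- i) - unif_of D A i = - (2 * i) / (D * A).
  by rewrite /unif_of /unif_num; field; rewrite (val_is_neq0 eA) (val_is_neq0 eD).
by apply: val_isW (val_isM (val_isN (val_isM two ei)) (val_isV (val_isM eD eA))); lia.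
Qed.

Lemma val_unif_oppA : val_is 8 (unif_of D (- A) i - unif_of D A i).
Proof.
have [eD eA _] := rescaled_vals hR.
have -> : unif_of D (- A) i - unif_of D A i = - (2 * (unif_num D A i + A ^+ 3)) / (D * A).
  by rewrite /unif_of /unif_num; field; rewrite oppr_eq0 (val_is_neq0 eA) (val_is_neq0 eD).
have e6 : val_is 6 (unif_num D A i + A ^+ 3).
  apply: val_isDl; first by apply: val_geW (val_is_ge (val_is_unif_num hR)); lia.
  by apply: val_isW (val_isX 3 eA); lia.
by apply: val_isW (val_isM (val_isN (val_isM two e6)) (val_isV (val_isM eD eA))); lia.
Qed.

End Differences.

Section OppositeD.
Variables D A i A' i' : F.
Hypothesis hR : rescaled_rel k m D A i.
Hypothesis hR' : rescaled_rel k m (- D) A' i'.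

(* A^2 - A'^2 = 2 D mu has valuation 12, while the difference of the two
   factors is 2 A', of valuation 10. *)
Lemma val_is_oppD_factors : val_is 6 (A + A') /\ val_is 6 (A - A').
Proof.
have [eD eA _] := rescaled_vals hR; have [_ eA' _] := rescaled_vals hR'.
have [_ hA _] := hR; have [_ hA' _] := hR'.
apply: (val_is_factors (N := 6) (M := 10)) => //.
  have -> : (A + A') * (A - A') = 2 * D * mu by ring: hA hA'.
  by apply: val_isW (val_isM (val_isM two eD) val_is_mu); lia.
have -> : (A + A') - (A - A') = 2 * A' by ring.
by apply: val_isW (val_isM two eA'); lia.
Qed.

Lemma val_is_oppD_cubes : val_is 10 (A ^+ 3 - A' ^+ 3).
Proof.
have [_ eA _] := rescaled_vals hR; have [_ eA' _] := rescaled_vals hR'.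
have [eP eM] := val_is_oppD_factors.
have -> : A ^+ 3 - A' ^+ 3 = (A - A') * (- (A * A') + (A + A') ^+ 2) by ring.
have e4 : val_is 4 (- (A * A') + (A + A') ^+ 2).
  apply: val_isDr; first by apply/val_isN; apply: val_isW (val_isM eA eA'); lia.
  by apply: val_geW (val_is_ge (val_isX 2 eP)); lia.
by apply: val_isW (val_isM eM e4); lia.
Qed.

Lemma unif_oppD_sub : unif_of (- D) A' i' - unif_of D A i =
  (i' - i + 2 * D + (A ^+ 3 - A' ^+ 3)) / (- D * A')
  + unif_num D A i * ((- D * A')^-1 - (D * A)^-1).
Proof. by rewrite /unif_of /unif_num; ring. Qed.

Lemma val_is_oppD_tail :
  val_is 5 (unif_num D A i * ((- D * A')^-1 - (D * A)^-1)).
Proof.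
have [eD eA _] := rescaled_vals hR; have [_ eA' _] := rescaled_vals hR'.
have [eP _] := val_is_oppD_factors.
have -> : (- D * A')^-1 - (D * A)^-1 = - (A + A') / (D * A * A').
  by field; rewrite oppr_eq0 (val_is_neq0 eA) (val_is_neq0 eD) (val_is_neq0 eA').
apply: val_isW (val_isM (val_is_unif_num hR)
  (val_isM (val_isN eP) (val_isV (val_isM (val_isM eD eA) eA')))); lia.
Qed.

Lemma val_unif_oppD_oppi : i' = - i -> val_is 2 (unif_of (- D) A' i' - unif_of D A i).
Proof.
move=> hi; have [eD _ ei] := rescaled_vals hR; have [_ eA' _] := rescaled_vals hR'.
rewrite unif_oppD_sub hi; apply: val_isDr; last first.
  by apply: val_geW (val_is_ge val_is_oppD_tail); lia.
have e8 : val_is 8 (- i - i + 2 * D + (A ^+ 3 - A' ^+ 3)).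
  rewrite -addrA; apply: val_isDr.
    have -> : - i - i = - (2 * i) by ring.
    by apply/val_isN; apply: val_isW (val_isM two ei); lia.
  apply: val_geD; first by apply: val_geW (val_is_ge (val_isM two eD)); lia.
  by apply: val_geW (val_is_ge val_is_oppD_cubes); lia.
by apply: val_isW (val_isM e8 (val_isV (val_isM (val_isN eD) eA'))); lia.
Qed.

Lemma val_unif_oppD : i' = i -> val_is 4 (unif_of (- D) A' i' - unif_of D A i).
Proof.
move=> hi; have [eD _ _] := rescaled_vals hR; have [_ eA' _] := rescaled_vals hR'.
rewrite unif_oppD_sub hi subrr add0r; apply: val_isDr; last first.
  by apply: val_geW (val_is_ge val_is_oppD_tail); lia.
have e10 : val_is 10 (2 * D + (A ^+ 3 - A' ^+ 3)).
  by apply: val_isDl val_is_oppD_cubes; apply: val_geW (val_is_ge (val_isM two eD)); lia.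
by apply: val_isW (val_isM e10 (val_isV (val_isM (val_isN eD) eA'))); lia.
Qed.

End OppositeD.

Section RootTriple.
Variables delta alpha beta : F.
Hypothesis hroots : root_triple (c_const k m) delta alpha beta.

Lemma root_triple_delta_neq0 : delta != 0.
Proof.
have [hd _ _] := hroots; apply: contraNneq (val_is_neq0 val_is_c_const) => d0.
by rewrite -oppr_eq0 -hd d0 expr0n.
Qed.

Lemma rescaled_rel_roots :
  rescaled_rel k m (resc_D k delta) (resc_A k delta alpha) (resc_i delta alpha beta).
Proof.
have [hd ha hb] := hroots; rewrite /resc_A /resc_i; set D := resc_D k delta.
have P0 : P != 0 := val_is_neq0 val_is_pow2.
have d0 := root_triple_delta_neq0.
have hc : c_const k m = - delta ^+ 2 by rewrite hd opprK.
have hD2 : D ^+ 2 = - (2 * mm) by rewrite expr_div_n hd c_constE; field.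
have hDk : (D ^+ k) ^+ 2 = P * mu by rewrite -exprM mulnC exprM hD2 -mulrN exprMn.
split=> //.
  by rewrite expr_div_n exprMn hDk ha hc /D /resc_D; field.
by rewrite expr_div_n exprMn ha hb -c_constE hc; field.
Qed.

Lemma root_triple_neq :
  [/\ alpha != - alpha, beta != - beta, alpha != beta & alpha != - beta].
Proof.
have [hd ha hb] := hroots; have [_ _ /val_is_neq0] := rescaled_vals rescaled_rel_roots.
rewrite /resc_i !mulf_eq0 !negb_or => /andP[/andP[a0 b0] _].
have d0 := root_triple_delta_neq0; have t0 := val_is_neq0 two.
have opp_neq (x : F) : x != 0 -> x != - x.
  move=> x0; apply/eqP => xN; move: (mulf_neq0 t0 x0).
  by rewrite (_ : 2 * x = x - - x); [rewrite -xN subrr eqxx | ring].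
have ab : alpha ^+ 2 != beta ^+ 2.
  apply/eqP => e; move: (mulf_neq0 t0 d0).
  rewrite (_ : 2 * delta = alpha ^+ 2 - beta ^+ 2); first by rewrite e subrr eqxx.
  by rewrite ha hb; ring.
by split; rewrite ?opp_neq //; apply/eqP => e; move: ab; rewrite e ?sqrrN eqxx.
Qed.

End RootTriple.

Lemma val_unif_roots_sub d a b d' a' b' :
  root_triple (c_const k m) d a b -> root_triple (c_const k m) d' a' b' ->
  (a', b') != (a, b) ->
  val_is (ram_index a b (a', b')) (unif_of_roots k d' a' b' - unif_of_roots k d a b).
Proof.
move=> h h' ne; have hR := rescaled_rel_roots h; have hR' := rescaled_rel_roots h'.
have [/negbTE aN /negbTE bN /negbTE ab /negbTE aNb] := root_triple_neq h.
have ba : (b == a) = false by rewrite eq_sym.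
have bNa : (b == - a) = false by rewrite eq_sym eqr_oppLR.
rewrite /unif_of_roots.
case: (root_triple_cases h h') => -[-> [[->|->] [->|->]]] in hR' ne *;
  rewrite /ram_index /ram_seq4 /ram_seq2 !inE !xpair_eqE ?eqr_opp ?eqr_oppLR ?opprK ?eqxx
    ?aN ?bN ?ab ?aNb ?ba ?bNa //=.
- by rewrite eqxx in ne.
- by rewrite resc_iNr; apply: val_unif_oppi hR.
- by rewrite resc_AN resc_iNl; apply: val_unif_oppAi hR.
- by rewrite resc_AN resc_iNl resc_iNr opprK; apply: val_unif_oppA hR.
- rewrite resc_DN in hR' *; apply: val_unif_oppD_oppi hR hR' _.
  by rewrite resc_iNd resc_iC.
- rewrite resc_DN in hR' *; apply: val_unif_oppD hR hR' _.
  by rewrite resc_iNd resc_iNr resc_iC opprK.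
- rewrite resc_DN in hR' *; apply: val_unif_oppD hR hR' _.
  by rewrite resc_iNd resc_iNl resc_iC opprK.
- rewrite resc_DN in hR' *; apply: val_unif_oppD_oppi hR hR' _.
  by rewrite resc_iNd resc_iNl resc_iNr resc_iC opprK.
Qed.

End Rescaled.

End Valuation.

Lemma adjoin_degree_leq_size (K : fieldType) (L : fieldExtType K) (U : {subfield L})
    (x : L) (p : {poly L}) n :
  p \is a polyOver U -> root p x -> p != 0 -> (size p <= n.+1)%N ->
  (adjoin_degree U x <= n)%N.
Proof.
move=> pU px p0 sp; have := dvdp_leq p0 (minPoly_dvdp pU px).
by rewrite size_minPoly => h; rewrite -ltnS (leq_trans h sp).
Qed.

Lemma dim_adjoin_biquadratic (K : fieldType) (L : fieldExtType K) (c a b : L) :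
  c \in 1%VS -> (a ^+ 2 + c) ^+ 2 + c = 0 -> b ^+ 2 \in <<1; a>>%VS ->
  (\dim <<1 & [:: a; b]>> <= 8)%N.
Proof.
move=> c1 ha hb; rewrite adjoin_cons adjoin_seq1.
rewrite (dim_Fadjoin <<1; a>>%AS) (dim_Fadjoin 1%AS) /= dimv1 muln1.
have deg_a : (adjoin_degree 1%AS a <= 4)%N.
  pose q : {poly L} := 'X^2 + c%:P.
  have sq2 : size (q ^+ 2) = 5.
    have := size_exp q 2; rewrite size_XnaddC //.
    by case: (size (q ^+ 2)) => // n /= ->.
  have sqc : size (q ^+ 2 + c%:P) = 5.
    by rewrite size_polyDl sq2 // (leq_ltn_trans (size_polyC_leq1 _)).
  apply: (adjoin_degree_leq_size (p := q ^+ 2 + c%:P)); rewrite ?sqc //.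
  - by rewrite rpredD ?rpredX ?polyOverXnaddC ?polyOverC.
  - by rewrite /root !hornerE ha.
  - by rewrite -size_poly_eq0 sqc.
have deg_b : (adjoin_degree <<1; a>>%AS b <= 2)%N.
  apply: (adjoin_degree_leq_size (p := 'X^2 + (- b ^+ 2)%:P)).
  - by rewrite polyOverXnaddC rpredN.
  - by rewrite /root !hornerE addrN.
  - by rewrite -size_poly_eq0 size_XnaddC.
  - by rewrite size_XnaddC.
by have := leq_mul deg_b deg_a.
Qed.

Section TotallyRamified.
Variables (K : fieldType) (L : splittingFieldType K) (v : K -> int) (w : L -> int).
Hypothesis hw : is_valuation w.
Hypothesis hwv : forall x : K, x != 0 -> w x%:A = 8 * v x.
Hypothesis hdim : (\dim {:L} <= 8)%N.
Variable p0 : L.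
Hypothesis hp0 : val_is w 1 p0.

Lemma val_is_coef_pow (a : K) j : a != 0 -> val_is w (8 * v a + j%:Z) (a%:A * p0 ^+ j).
Proof.
move=> a0; have ea : val_is w (8 * v a) a%:A.
  by split; [rewrite scaler_eq0 oner_eq0 orbF | exact: hwv].
by apply: val_isW (val_isM hw ea (val_isX hw j hp0)); lia.
Qed.

Lemma val_coef_pow_distinct (a : nat -> K) i j :
  (i < 8)%N -> (j < 8)%N -> i != j ->
  (a i)%:A * p0 ^+ i != 0 -> (a j)%:A * p0 ^+ j != 0 ->
  w ((a i)%:A * p0 ^+ i) != w ((a j)%:A * p0 ^+ j).
Proof.
move=> i8 j8 ij ai0 aj0.
have [ai|/(val_is_coef_pow i)[_ ->]] := eqVneq (a i) 0.
  by move: ai0; rewrite ai scale0r mul0r eqxx.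
have [aj|/(val_is_coef_pow j)[_ ->]] := eqVneq (a j) 0.
  by move: aj0; rewrite aj scale0r mul0r eqxx.
by apply/negP => /eqP; move/eqP: ij; lia.
Qed.

Definition unif_powers : 8.-tuple L := [tuple p0 ^+ i | i < 8].

Lemma unif_powersE (i : 'I_8) : unif_powers`_i = p0 ^+ i.
Proof. by rewrite -tnth_nth tnth_mktuple. Qed.

Lemma unif_powers_free : free unif_powers.
Proof.
apply/freeP => a ha i; pose b j := a (inord j).
have hb : \sum_(j < 8) (b j)%:A * p0 ^+ j = 0.
  by rewrite -[RHS]ha; apply: eq_bigr => j _; rewrite /b inord_val unif_powersE mulr_algl.
have [hz|[j [_ _ /val_is_neq0]]] := val_sum_distinct hw (@val_coef_pow_distinct b).
  move/eqP: (hz i (ltn_ord i)); rewrite /b inord_val mulf_eq0 expf_eq0.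
  rewrite (negbTE (val_is_neq0 hp0)) andbF orbF scaler_eq0 oner_eq0 orbF.
  by move/eqP.
by rewrite hb eqxx.
Qed.

Lemma unif_powers_span : <<unif_powers>>%VS = fullv.
Proof.
apply/eqP; rewrite eqEdim subvf /=.
by move: unif_powers_free; rewrite /free size_tuple => /eqP ->.
Qed.

Lemma unif_powers_coord (x : L) : exists a : nat -> K,
  x = \sum_(i < 8) (a i)%:A * p0 ^+ i.
Proof.
have hx : x \in <<unif_powers>>%VS by rewrite unif_powers_span memvf.
exists (fun j => coord unif_powers (inord j) x); rewrite {1}(coord_span hx).
by apply: eq_bigr => j _; rewrite inord_val unif_powersE mulr_algl.
Qed.

Lemma unif_coord_vals (a : nat -> K) :
  val_is w 1 (\sum_(i < 8) (a i)%:A * p0 ^+ i) ->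
  val_is w 0 (a 1%N)%:A /\ forall i, (i < 8)%N -> val_ge w 0 (a i)%:A.
Proof.
move=> hs; have [hz|[j [j8 aj0 hj hmin]]] := val_sum_distinct hw (@val_coef_pow_distinct a).
  by move: (val_is_neq0 hs); rewrite big1 ?eqxx // => i _; apply: hz.
have wj := val_is_inj hj hs.
have a0 (i : nat) : (a i)%:A * p0 ^+ i != 0 -> a i != 0.
  by apply: contraNneq => ->; rewrite scale0r mul0r.
have [_ hwj] := val_is_coef_pow j (a0 _ aj0).
rewrite hwj in wj; have j1 : j = 1%N by lia.
subst j; have a10 := a0 _ aj0; set v1 := v (a 1%N) in wj hwj.
split; first by split; [rewrite scaler_eq0 oner_eq0 orbF | rewrite hwv // -/v1; lia].
move=> i i8; have [->|ai0] := eqVneq (a i) 0; first by rewrite scale0r; left.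
have [ei hwi] := val_is_coef_pow i ai0.
by right; move: (hmin i i8 ei); rewrite hwi hwj hwv //; lia.
Qed.

Lemma val_is_gal_sub_unif (pi : L) (g : gal_of {:L}) N :
  val_is w 1 pi -> (forall a : K, g a%:A = a%:A) -> 1 <= N ->
  val_is w 1 (g p0) -> val_is w N (g p0 - p0) -> val_is w N (g pi - pi).
Proof.
move=> hpi gK N1 hg hgN; have [a api] := unif_powers_coord pi.
rewrite api in hpi; have [ea1 ga] := unif_coord_vals hpi.
have -> : g pi - pi = \sum_(i < 8) (a i)%:A * (g p0 ^+ i - p0 ^+ i).
  rewrite api rmorph_sum -sumrB; apply: eq_bigr => i _.
  rewrite rmorphM [X in X * _ - _](_ : _ = (a i)%:A); last exact: gK.
  by rewrite rmorphXn mulrBr.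
rewrite -(big_mkord xpredT (fun i => (a i)%:A * (g p0 ^+ i - p0 ^+ i))).
rewrite big_ltn // big_ltn // !expr0 subrr mulr0 add0r !expr1.
apply: (val_isDr hw); first by apply: val_isW (val_isM hw ea1 hgN); lia.
rewrite big_nat; apply: (val_ge_sum hw) => -[|[|i]] // /andP[_ i8].
apply: val_geW (val_geM hw (ga _ i8) (val_ge_pow_sub hw i hg hp0 hgN)); lia.
Qed.

End TotallyRamified.

Section Proposition.
Variables (K : fieldType) (v : K -> int).
Hypothesis hv2 : v 2 = 1.
Variables (k : nat) (m : int).
Hypothesis hk : (1 <= k)%N.
Hypothesis hm : odd `|m|%N.
Variables (L : splittingFieldType K) (delta alpha beta : L).
Hypothesis hroots : root_triple (c_const k m) delta alpha beta.
Hypothesis hgen : (<<1 & [:: alpha; beta]>>)%VS = fullv.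
Variable w : L -> int.
Hypothesis hw : is_valuation w.
Hypothesis hwv : forall x : K, x != 0 -> w x%:A = 8 * v x.
Variable pi : L.
Hypothesis hpi : val_is w 1 pi.

Local Notation Gal := ('Gal({:L} / 1%VS))%g.

Lemma two_alg : (2 : L) = (2 : K)%:A.
Proof. by rewrite -in_algE rmorph_nat. Qed.

(* In characteristic 2 we would have c = delta = alpha = beta = 0, so L = K,
   and K contains no element of valuation 1. *)
Lemma val_is_two : val_is w 8 (2 : L).
Proof.
have K2 : (2 : K) != 0.
  apply/eqP => K20; have L20 : (2 : L) = 0 by rewrite two_alg K20 scale0r.
  have [hd ha hb] := hroots.
  have c0 : c_const k m = 0 :> L.
    by rewrite /c_const rmorphM rmorphXn /= exprD expr1 rmorph_nat L20 !mulr0 mul0r.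
  have sqr0 (x : L) : x ^+ 2 = 0 -> x = 0 by move/eqP; rewrite expf_eq0 => /andP[_ /eqP].
  have d0 : delta = 0 by apply: sqr0; rewrite hd c0 oppr0.
  have a0 : alpha = 0 by apply: sqr0; rewrite ha c0 d0 oppr0 addr0.
  have b0 : beta = 0 by apply: sqr0; rewrite hb c0 d0 oppr0 addr0.
  have K0 : <<(1%AS : {subfield L}); 0>>%VS = 1%VS by apply/Fadjoin_idP; rewrite mem0v.
  have /vlineP[a pia] : pi \in 1%VS.
    by move: hgen; rewrite a0 b0 adjoin_cons adjoin_seq1 !K0 => ->; rewrite memvf.
  have a0' : a != 0 by apply: contraNneq (val_is_neq0 hpi) => a0'; rewrite pia a0' scale0r.
  by have [_] := hpi; rewrite pia hwv //; lia.
by split; rewrite two_alg; [rewrite scaler_eq0 oner_eq0 orbF | rewrite hwv // hv2].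
Qed.

Lemma dim_le8 : (\dim {:L} <= 8)%N.
Proof.
have [hd ha hb] := hroots; rewrite -hgen.
apply: (dim_adjoin_biquadratic (c := c_const k m)).
- by rewrite rpred_int.
- have -> : alpha ^+ 2 + c_const k m = delta by rewrite ha; ring.
  by rewrite hd addNr.
have -> : beta ^+ 2 = - (2 * c_const k m) - alpha ^+ 2 by rewrite hb ha; ring.
rewrite rpredB ?rpredX ?memv_adjoin // rpredN rpredM //;
  apply: (subvP (subv_adjoin 1%VS alpha)); [exact: rpred_nat | exact: rpred_int].
Qed.

Lemma gal_eq1 (g : gal_of {:L}) : g alpha = alpha -> g beta = beta -> g = 1%g.
Proof.
move=> ga gb; apply/eqP/gal_eqP => x _; rewrite gal_id.
have : (<<1 & [:: alpha; beta]>> <= fixedField [set g])%VS.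
  apply/Fadjoin_seqP; split; first exact: sub1v.
  move=> y; rewrite !inE => /orP[] /eqP ->; apply/fixedFieldP; rewrite ?memvf //;
    by move=> h; rewrite inE => /eqP ->.
by rewrite hgen => /subvP/(_ x (memvf x))/mem_fixedFieldP[_ ->] //; rewrite inE.
Qed.

Lemma gal_root_triple (g : gal_of {:L}) :
  root_triple (c_const k m) (g delta) (g alpha) (g beta).
Proof.
have [hd ha hb] := hroots.
by split; rewrite -rmorphXn ?hd ?ha ?hb ?(rmorphN, rmorphD, rmorphB) /c_const rmorph_int.
Qed.

Lemma gal_unif_of_roots (g : gal_of {:L}) :
  g (unif_of_roots k delta alpha beta) = unif_of_roots k (g delta) (g alpha) (g beta).
Proof.
rewrite /unif_of_roots /unif_of /unif_num /resc_A /resc_i /resc_D.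
by rewrite !(fmorph_div, rmorphM, rmorphB, rmorphD, rmorphXn, rmorph1, rmorph_nat).
Qed.

Lemma val_is_gal_sub (g : gal_of {:L}) : g \in Gal -> g != 1%g ->
  val_is w (ram_index alpha beta (g alpha, g beta)) (g pi - pi).
Proof.
move=> gG g1; have two := val_is_two; pose p0 := unif_of_roots k delta alpha beta.
have hp0 : val_is w 1 p0.
  exact: (val_is_unif hw two hk hm (rescaled_rel_roots hw two hk hm hroots)).
have hgp0 : val_is w 1 (g p0).
  by rewrite gal_unif_of_roots; apply: (val_is_unif hw two hk hm);
    exact: (rescaled_rel_roots hw two hk hm (gal_root_triple g)).
have gK (a : K) : g a%:A = a%:A by apply: (fixed_gal (sub1v _) gG); rewrite rpredZ ?mem1v.
apply: (val_is_gal_sub_unif hw hwv dim_le8 hp0 hpi gK) => //.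
  by rewrite ram_index_leE.
rewrite gal_unif_of_roots.
apply: (val_unif_roots_sub hw two hk hm hroots (gal_root_triple g)).
by apply: contra_neq g1 => -[]; apply: gal_eq1.
Qed.

Lemma ram_groupE n : ram_group w pi n =
  [set g in Gal | (g == 1%g) || ((n.+1)%:Z <= ram_index alpha beta (g alpha, g beta))].
Proof.
apply/setP => g; rewrite !inE; case: (boolP (g \in Gal)) => //= gG.
have [->|g1] := eqVneq g 1%g; first by rewrite gal_id eqxx.
have [gpi ->] := val_is_gal_sub gG g1.
by move: gpi; rewrite subr_eq0 => /negbTE ->.
Qed.

Lemma ram_group_le7 n : (n <= 7)%N -> ram_group w pi n =
  [set g in Gal | (n.+1)%:Z <= ram_index alpha beta (g alpha, g beta)].
Proof.
move=> n7; rewrite ram_groupE; apply/setP => g; rewrite !inE.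
have [->|_] //= := eqVneq g 1%g.
by rewrite !gal_id ram_index_leE !mem_head !andbT (ltnS n 7) n7 !orbT andbT.
Qed.

Lemma ram_group_le1 n : (n <= 1)%N -> ram_group w pi n = Gal.
Proof.
move=> n1; rewrite ram_group_le7; last by lia.
apply/setP => g; rewrite !in_set ram_index_leE.
have -> : (n < 2)%N by lia.
by rewrite andbT.
Qed.

Lemma ram_group_2_3 n : (2 <= n <= 3)%N ->
  ram_group w pi n = gal_by_images alpha beta (ram_seq2 alpha beta).
Proof.
move=> n23; rewrite ram_group_le7; last by lia.
apply/setP => g; rewrite !in_set ram_index_leE.
have [-> -> ->] : [/\ (n < 2)%N = false, (n < 4)%N & (n < 8)%N] by split; lia.
by rewrite /= orb_idr //; apply: ram_seq4_sub.
Qed.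

Lemma ram_group_4_7 n : (4 <= n <= 7)%N ->
  ram_group w pi n = gal_by_images alpha beta (ram_seq4 alpha beta).
Proof.
move=> n47; rewrite ram_group_le7; last by lia.
apply/setP => g; rewrite !in_set ram_index_leE.
by have [-> -> ->] : [/\ (n < 2)%N = false, (n < 4)%N = false & (n < 8)%N]
  by split; lia.
Qed.

Lemma ram_group_ge8 n : (8 <= n)%N -> ram_group w pi n = [set 1%g].
Proof.
move=> n8; rewrite ram_groupE; apply/setP => g; rewrite !in_set ram_index_leE.
have [-> -> ->] : [/\ (n < 2)%N = false, (n < 4)%N = false & (n < 8)%N = false].
  by split; lia.
by rewrite /= orbF in_set1; case: eqVneq => [->|]; rewrite ?group1 ?andbF.
Qed.

Lemma lower_ramification_groups :
  [/\ ram_group w pi 0 = Gal /\ ram_group w pi 1 = Gal,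
      ram_group w pi 2 = gal_by_images alpha beta (ram_seq2 alpha beta)
        /\ ram_group w pi 3 = ram_group w pi 2,
      forall n, (4 <= n <= 7)%N ->
        ram_group w pi n = gal_by_images alpha beta (ram_seq4 alpha beta)
    & forall n, (8 <= n)%N -> ram_group w pi n = [set 1%g]].
Proof.
split; [by split; apply: ram_group_le1 | by rewrite !ram_group_2_3 | |].
  exact: ram_group_4_7.
exact: ram_group_ge8.
Qed.

End Proposition.

Unset Implicit Arguments.
Set Strict Implicit.

Theorem proposition7p4
  (K : fieldType) (v : K -> int) (hK : is_Q2 v)
  (k : nat) (hk : (1 <= k)%N) (m : int) (hm : odd `|m|%N)
  (L : splittingFieldType K)
  (delta alpha beta : L)
  (hdelta : delta ^+ 2 = - ((2 ^+ (2 * k + 1) * m)%:~R))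
  (halpha : alpha ^+ 2 = - ((2 ^+ (2 * k + 1) * m)%:~R) + delta)
  (hbeta : beta ^+ 2 = - ((2 ^+ (2 * k + 1) * m)%:~R) - delta)
  (hgen : (<< 1%VS & [:: alpha; beta] >>)%VS = fullv)
  (w : L -> int) (hw : is_valuation w)
  (hwv : forall x : K, x != 0 -> w (x%:A) = 8 * v x)
  (pi : L) (hpi0 : pi != 0) (hpi : w pi = 1) :
  let G := ram_group w pi in
  let S := gal_by_images alpha beta in
  [/\ G 0%N = ('Gal({:L} / 1%VS))%g /\ G 1%N = ('Gal({:L} / 1%VS))%g,
      G 2%N = S [:: (alpha, beta); (-alpha, -beta); (-beta, alpha); (beta, -alpha)]
        /\ G 3%N = G 2%N,
      (forall n : nat, (4 <= n <= 7)%N ->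
         G n = S [:: (alpha, beta); (-alpha, -beta)])
    & (forall n : nat, (8 <= n)%N -> G n = [set 1%g])].
Proof.
have [_ hv2 _ _] := hK.
exact: (lower_ramification_groups hv2 hk hm (And3 hdelta halpha hbeta) hgen hw hwv
  (conj hpi0 hpi)).
Qed.
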